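(* Consider the saddle-point problem $\min_{x_1\in\mathcal{X}_1}\max_{x_2\in\mathcal{X}_2} f(x_1,x_2)$ described in the context, and assume it is coherent. Assume $g$ is $L_g$-Lipschitz, i.e. $\|g(x)-g(x')\|_*\le L_g\|x-x'\|$ for all $x,x'\in\mathcal{X}$. Run the optimistic mirror descent algorithm with exact gradients, $$Y_n = P_{X_n}(-\gamma_n g(X_n)),\qquad X_{n+1} = P_{X_n}(-\gamma_n g(Y_n)),$$ with a step-size sequence $\{\gamma_n\}_n$ satisfying $$0<\lim_{n\to\infty}\gamma_n\le \sup_n \gamma_n < K/L_g.$$ Then $\lim_{n\to\infty} X_n = x^*$ for some $x^*\in\mathcal{X}^*$. Moreover, there exists a sufficiently large $n_0$ such that $D(x^*,X_n)$ decreases monotonically in $n$ for all $n\ge n_0$.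
   Context: Let $\mathcal{V}_i=\mathbb{R}^{d_i}$ ($i=1,2$) be finite-dimensional normed spaces, $\mathcal{X}_i\subset\mathcal{V}_i$ compact convex sets, $\mathcal{X}=\mathcal{X}_1\times\mathcal{X}_2\subset\mathcal{V}=\mathcal{V}_1\times\mathcal{V}_2$ with norm $\|\cdot\|$ and dual norm $\|\cdot\|_*$ on $\mathcal{V}^*$. Let $f:\mathcal{X}\to\mathbb{R}$ be continuously differentiable and $g(x)=(\nabla_{x_1}f(x_1,x_2),-\nabla_{x_2}f(x_1,x_2))\in\mathcal{V}^*$. Let $\mathcal{X}^*$ be the set of solutions (saddle points) of the problem (SP) $\min_{x_1}\max_{x_2} f$. A point $x^*$ solves (SVI) if $\langle g(x^* ),x-x^*\rangle\ge0$ for all $x\in\mathcal{X}$, and satisfies (MVI) if $\langle g(x),x-x^*\rangle\ge 0$ for all $x\in\mathcal{X}$. (SP) is coherent if: (1) every solution of (SVI) solves (SP); (2) there is a solution $p$ of (SP) satisfying (MVI); (3) for some fixed $\epsilon_0>0$, every solution $x^*$ of (SP) satisfies $\langle g(x),x-x^*\rangle\ge0$ for all $x\in\mathcal{X}$ with $D(x^*,x)\le\epsilon_0$. Fix a differentiable function $h$ whose domain contains $\mathcal{X}$, which is $K$-strongly convex in the sense $\langle\nabla h(x)-\nabla h(x'),x-x'\rangle\ge K\|x-x'\|^2$ for all $x,x'\in\mathcal{X}$, and whose gradient is $L_h$-Lipschitz ($\|\nabla h(x)-\nabla h(x')\|_*\le L_h\|x-x'\|$). The Bregman divergence is $D(p,x)=h(p)-h(x)-\langle\nabla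 h(x),p-x\rangle$, and it is assumed to satisfy the Bregman reciprocity condition: $D(p,x_n)\to0$ whenever $x_n\to p$. The prox-mapping is $P_x(y)=\arg\min_{x'\in\mathcal{X}}\{\langle y,x-x'\rangle+D(x',x)\}$ for $y\in\mathcal{V}^*$. *)

(* R : realType, V = 'rV[R]_(d1 + d2) = V1 x V2
   (x1 = lsubmx x, x2 = rsubmx x).  V* is identified with 'rV[R]_(d1+d2)
   through the standard pairing [pair y x] = sum_i y_i x_i. *)
From HB Require Import structures.
From mathcomp Require Import all_boot all_order all_algebra.
From mathcomp Require Import all_classical all_reals all_analysis.
Set Implicit Arguments. Unset Strict Implicit. Unset Printing Implicit Defensive.
Import Order.TTheory GRing.Theory Num.Theory.
Import numFieldNormedType.Exports.
Local Open Scope classical_set_scope.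
Local Open Scope ring_scope.

Section Defs.
Variable R : realType.

Definition pair (n : nat) (y x : 'rV[R]_n) : R := \sum_(i < n) y 0 i * x 0 i.

Definition is_norm (n : nat) (nrm : 'rV[R]_n -> R) : Prop :=
  [/\ forall x, 0 <= nrm x,
      forall x, nrm x = 0 -> x = 0,
      forall (a : R) x, nrm (a *: x) = `|a| * nrm x &
      forall x y, nrm (x + y) <= nrm x + nrm y].

Definition dnorm (n : nat) (nrm : 'rV[R]_n -> R) (y : 'rV[R]_n) : R :=
  sup [set pair y x | x in [set x | nrm x <= 1]].

Definition prodset (d1 d2 : nat) (X1 : set 'rV[R]_d1) (X2 : set 'rV[R]_d2)
  : set 'rV[R]_(d1 + d2) := [set x | X1 (lsubmx x) /\ X2 (rsubmx x)].

Definition is_saddle (d1 d2 : nat) (X1 : set 'rV[R]_d1) (X2 : set 'rV[R]_d2)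
  (f : 'rV[R]_(d1 + d2) -> R) (xs : 'rV[R]_(d1 + d2)) : Prop :=
  X1 (lsubmx xs) /\ X2 (rsubmx xs) /\
  (forall x1 x2, X1 x1 -> X2 x2 ->
     f (row_mx (lsubmx xs) x2) <= f xs /\ f xs <= f (row_mx x1 (rsubmx xs))).

Definition is_SVI (n : nat) (X : set 'rV[R]_n) (g : 'rV[R]_n -> 'rV[R]_n) xs :=
  X xs /\ forall x, X x -> 0 <= pair (g xs) (x - xs).

Definition is_MVI (n : nat) (X : set 'rV[R]_n) (g : 'rV[R]_n -> 'rV[R]_n) xs :=
  X xs /\ forall x, X x -> 0 <= pair (g x) (x - xs).

Definition bregman (n : nat) (h : 'rV[R]_n -> R) (gh : 'rV[R]_n -> 'rV[R]_n)
  (p x : 'rV[R]_n) : R := h p - h x - pair (gh x) (p - x).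

Definition is_prox (n : nat) (X : set 'rV[R]_n) (h : 'rV[R]_n -> R)
  (gh : 'rV[R]_n -> 'rV[R]_n) (x y z : 'rV[R]_n) : Prop :=
  X z /\ forall x', X x' ->
    pair y (x - z) + bregman h gh z x <= pair y (x - x') + bregman h gh x' x.

End Defs.

(* Fejer-type argument for optimistic mirror descent.  The optimality conditions of
   the two prox steps, the three-point identity for D, strong convexity of h and the
   Lipschitz bound on g combine (with Young's inequality) into the one-step estimate
     D(p, X_{n+1}) <= D(p, X_n) - gamma_n <g(Y_n), Y_n - p>
                      - (K - b Lg)/2 (|X_{n+1} - Y_n|^2 + |Y_n - X_n|^2),
   where b bounds the step sizes.  For the MVI solution p the middle term is
   nonpositive, so the squared steps |Y_n - X_n|^2 are summable and Y_n - X_n -> 0.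
   A cluster point z of (X_n) then solves the SVI, hence is a saddle point.  Near z
   the divergence D(z, .) is small (it is bounded by Lh |z - .|^2), so once X_n comes
   close to z, coherence (3) makes the estimate with p = z a descent, which keeps the
   iterates in the sublevel set {D(z, .) <= eps0/2}; hence D(z, X_n) decreases to 0 and
   X_n -> z by strong convexity. *)

From HB Require Import structures.
From mathcomp Require Import all_boot all_order all_algebra.
From mathcomp Require Import all_classical all_reals all_analysis.
From mathcomp Require Import ring lra.
Import Order.TTheory GRing.Theory Num.Theory.
Import numFieldNormedType.Exports.
Local Open Scope classical_set_scope.
Local Open Scope ring_scope.

Section preliminaries.
#[local] Set Implicit Arguments.
#[local] Unset Strict Implicit.
Context {R : realType}.

Lemma convex_segment {M : lmodType R} {X : set M} {a b : M} {t : R} :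
  convex_set X -> X a -> X b -> 0 <= t -> t <= 1 -> X (b + t *: (a - b)).
Proof.
move=> cX Xa Xb t0 t1.
have := cX a b (Itv01 t0 t1); rewrite !inE => /(_ Xa Xb).
suff -> : b + t *: (a - b) = t *: a + unstable.onem t *: b by [].
by rewrite /unstable.onem scalerBl scale1r scalerBr addrCA addrC -!addrA [- _ + _]addrC.
Qed.

Lemma convex_prodset {d1 d2 : nat} (X1 : set 'rV[R]_d1) (X2 : set 'rV[R]_d2) :
  convex_set X1 -> convex_set X2 -> convex_set (prodset X1 X2).
Proof.
move=> cX1 cX2 x y t; rewrite !inE => -[Xx1 Xx2] [Xy1 Xy2].
have conv_sub d (A : set 'rV[R]_d) u v : convex_set A -> A u -> A v ->
    A (t%:num *: u + (unstable.onem t%:num) *: v).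
  by move=> cA Au Av; have := cA u v t; rewrite !inE => /(_ Au Av).
by split; rewrite /= linearD !linearZ /=; apply: conv_sub.
Qed.

Section row_vectors.
Context {n : nat}.
Implicit Types (x y : 'rV[R]_n).

Lemma pairDl y1 y2 x : pair (y1 + y2) x = pair y1 x + pair y2 x.
Proof. by rewrite /pair -big_split; apply: eq_bigr => i _; rewrite mxE mulrDl. Qed.

Lemma pairDr y x1 x2 : pair y (x1 + x2) = pair y x1 + pair y x2.
Proof. by rewrite /pair -big_split; apply: eq_bigr => i _; rewrite mxE mulrDr. Qed.

Lemma pairZl a y x : pair (a *: y) x = a * pair y x.
Proof. by rewrite /pair mulr_sumr; apply: eq_bigr => i _; rewrite mxE mulrA. Qed.

Lemma pairZr a y x : pair y (a *: x) = a * pair y x.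
Proof. by rewrite /pair mulr_sumr; apply: eq_bigr => i _; rewrite mxE mulrCA. Qed.

Lemma pairNl y x : pair (- y) x = - pair y x.
Proof. by rewrite -scaleN1r pairZl mulN1r. Qed.

Lemma pairNr y x : pair y (- x) = - pair y x.
Proof. by rewrite -scaleN1r pairZr mulN1r. Qed.

Lemma pairBl y1 y2 x : pair (y1 - y2) x = pair y1 x - pair y2 x.
Proof. by rewrite pairDl pairNl. Qed.

Lemma pairBr y x1 x2 : pair y (x1 - x2) = pair y x1 - pair y x2.
Proof. by rewrite pairDr pairNr. Qed.

Lemma pair0r y : pair y 0 = 0.
Proof. by rewrite -(scale0r 0) pairZr mul0r. Qed.

Lemma ler_mx_norm_entry x i : `|x 0 i| <= `|x|.
Proof.
rewrite [leRHS]/Num.norm /= mx_normrE.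
by apply/bigmax_geP; right; exists (0, i).
Qed.

Lemma mx_norm_le_entries x B : 0 <= B -> (forall i, `|x 0 i| <= B) -> `|x| <= B.
Proof.
move=> B0 xB; rewrite [leLHS]/Num.norm /= mx_normrE.
by apply/bigmax_leP; split => // -[i j] _ /=; rewrite (ord1 i).
Qed.

Lemma normr_pair_le y x : `|pair y x| <= (\sum_i `|y 0 i|) * `|x|.
Proof.
rewrite /pair mulr_suml; apply: le_trans (ler_norm_sum _ _ _) _.
apply: ler_sum => i _; rewrite normrM; apply: ler_wpM2l => //.
exact: ler_mx_norm_entry.
Qed.

End row_vectors.

Lemma compact_prodset {d1 d2 : nat} (X1 : set 'rV[R]_d1) (X2 : set 'rV[R]_d2) :
  compact X1 -> compact X2 -> compact (prodset X1 X2).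
Proof.
move=> cX1 cX2; apply: bounded_closed_compact.
  have [M1 [_ B1]] := compact_bounded cX1; have [M2 [_ B2]] := compact_bounded cX2.
  exists (Num.max M1 M2); split => [|M]; first exact: num_real.
  rewrite gt_max => /andP[M1M M2M] x [/(B1 _ M1M) /= x1M /(B2 _ M2M) /= x2M].
  apply: mx_norm_le_entries => [|i]; first exact: le_trans (normr_ge0 _) x1M.
  rewrite -[x]hsubmxK mxE; case: (fintype.split i) => j.
    exact: le_trans (ler_mx_norm_entry _ _) x1M.
  exact: le_trans (ler_mx_norm_entry _ _) x2M.
rewrite (_ : prodset X1 X2 = lsubmx @^-1` X1 `&` rsubmx @^-1` X2) //.
apply: closedI; apply: preimage_closed.
- by move=> x _; exact: continuous_lsubmx.
- exact: compact_closed (@norm_hausdorff _ _) cX1.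
- by move=> x _; exact: continuous_rsubmx.
- exact: compact_closed (@norm_hausdorff _ _) cX2.
Qed.

Lemma compact_cluster_seq {n : nat} (A : set 'rV[R]_n) (u : nat -> 'rV[R]_n) :
  compact A -> (forall k, A (u k)) ->
  exists2 z, A z & forall N e, 0 < e -> exists2 k, (N <= k)%N & `|u k - z| < e.
Proof.
move=> cA uA.
have [|z [Az zclus]] := cA (u @ \oo) _; first by exists 0%N => // k _; exact: uA.
exists z => // N e e0.
have uN : (u @ \oo) (u @` [set k | (N <= k)%N]) by exists N => // k /= Nk; exists k.
have [_ [[k /= Nk <-] ze]] := zclus _ _ uN (nbhsx_ballx z e e0).
by exists k => //; move: ze; rewrite -ball_normE /= distrC.
Qed.

Lemma ler_mul_div_add1 (C x e : R) : 0 <= C -> 0 <= e -> x <= e / (C + 1) -> C * x <= e.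
Proof.
move=> C0 e0 xe; have C1 : 0 < C + 1 by rewrite ltr_pwDr.
apply: le_trans (ler_wpM2l C0 xe) _; rewrite mulrCA ler_piMr //.
by rewrite ler_pdivrMr // mul1r lerDl.
Qed.

Lemma ge0_of_small_perturbation (A B : R) :
  (forall t, 0 < t -> t <= 1 -> 0 <= A + t * B) -> 0 <= A.
Proof.
move=> AtB; apply/ler_addgt0Pr => e e0.
pose t := Num.min 1 (e / (`|B| + 1)).
have t0 : 0 < t by rewrite lt_min ltr01 divr_gt0 // ltr_pwDr.
have t1 : t <= 1 by rewrite ge_min lexx.
have tB : `|B| * t <= e.
  by apply: ler_mul_div_add1; [exact: normr_ge0 | exact: ltW | rewrite ge_min lexx orbT].
apply: le_trans (AtB t t0 t1) _; rewrite lerD2l mulrC.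
exact: le_trans (ler_wpM2r (ltW t0) (ler_norm B)) tB.
Qed.

Lemma sublevel_nonincreasing (a : nat -> R) (N k0 : nat) (c : R) :
  (forall k, (N <= k)%N -> a k <= c -> a k.+1 <= a k) -> (N <= k0)%N -> a k0 <= c ->
  forall k, (k0 <= k)%N -> a k <= c /\ a k.+1 <= a k.
Proof.
move=> step Nk0 ak0 k /subnKC <-.
suff ac j : a (k0 + j)%N <= c by split; [|apply: step; rewrite ?(leq_trans Nk0) ?leq_addr].
elim: j => [|j IH]; first by rewrite addn0.
rewrite addnS; apply: le_trans (step _ _ IH) IH.
exact: leq_trans Nk0 (leq_addr _ _).
Qed.

Lemma descent_sqr_cvg0 (a r : nat -> R) (N : nat) (al : R) :
  0 < al -> (forall k, 0 <= a k) ->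
  (forall k, (N <= k)%N -> a k.+1 <= a k - al * r k ^+ 2) ->
  (fun k => r k ^+ 2) @ \oo --> 0.
Proof.
move=> al0 a0 descent; rewrite -(cvg_shiftn N).
pose u k := r (k + N)%N ^+ 2.
have sum_le m : al * series u m <= a N - a (m + N)%N.
  elim: m => [|m IH]; first by rewrite /series /= big_geq // mulr0 subrr.
  rewrite seriesSr mulrDr; have := descent (m + N)%N (leq_addl _ _).
  rewrite addSn /u; lra.
apply: cvg_series_cvg_0; apply: nondecreasing_is_cvgn.
  by apply: nondecreasing_series => k _ _; exact: sqr_ge0.
exists (a N / al) => _ [m _ <-]; rewrite ler_pdivlMr // mulrC.
by apply: le_trans (sum_le m) _; rewrite lerBlDr lerDl.
Qed.

Lemma is_derive_segment {n : nat} (h : 'rV[R]_n -> R) (a b : 'rV[R]_n) (t : R) :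
  differentiable h (b + t *: (a - b)) ->
  is_derive t 1 (fun s => h (b + s *: (a - b))) ('d h (b + t *: (a - b)) (a - b)).
Proof.
move=> dh.
(* the difference quotients at [t] are those of [h] at [b + t (a - b)] along [a - b] *)
have E : (fun s : R => s^-1 *: (((fun s => h (b + s *: (a - b))) \o shift t) (s *: 1)
          - h (b + t *: (a - b)))) =
         (fun s : R => s^-1 *: ((h \o shift (b + t *: (a - b))) (s *: (a - b))
          - h (b + t *: (a - b)))).
  apply: funext => s /=; congr (_ *: (h _ - _)).
  by rewrite [s%:A]mulr1 scalerDl addrCA.
apply: DeriveDef; first by rewrite /derivable E; exact: diff_derivable.
by rewrite /derive E; exact: deriveE.
Qed.

Lemma is_derive_quadratic (P Q t : R) :
  is_derive t 1 (fun s : R => P * s + Q * (s * s)) (P + Q * (t + t)).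
Proof.
have -> : (fun s : R => P * s + Q * (s * s)) = (P \*: id) + (Q \*: (id * id)) by [].
by apply: is_derive_eq; rewrite ![_%:A]mulr1.
Qed.

Lemma bregman_three_point {n : nat} (h : 'rV[R]_n -> R) gh p x y :
  bregman h gh p x - bregman h gh p y - bregman h gh y x = pair (gh y - gh x) (p - y).
Proof. by rewrite /bregman !pairBl !pairBr; ring. Qed.

End preliminaries.

Section normed_setting.
#[local] Set Implicit Arguments.
#[local] Unset Strict Implicit.
Context {R : realType} {n : nat} (nrm : 'rV[R]_n -> R).
Hypothesis nrm_norm : is_norm nrm.
Implicit Types (x y v : 'rV[R]_n).

Lemma nrm_ge0 x : 0 <= nrm x. Proof. by case: nrm_norm. Qed.
Lemma nrm_eq0 x : nrm x = 0 -> x = 0. Proof. by case: nrm_norm => _ + _ _; apply. Qed.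
Lemma nrmZ a x : nrm (a *: x) = `|a| * nrm x. Proof. by case: nrm_norm. Qed.
Lemma nrmD x y : nrm (x + y) <= nrm x + nrm y. Proof. by case: nrm_norm. Qed.
Lemma nrm0 : nrm 0 = 0. Proof. by rewrite -(scale0r 0) nrmZ normr0 mul0r. Qed.
Lemma nrmN x : nrm (- x) = nrm x. Proof. by rewrite -scaleN1r nrmZ normrN normr1 mul1r. Qed.
Lemma nrm_distC x y : nrm (x - y) = nrm (y - x). Proof. by rewrite -nrmN opprB. Qed.

Lemma nrm_distD x y z : nrm (x - z) <= nrm (x - y) + nrm (y - z).
Proof.
have -> : x - z = (x - y) + (y - z) by rewrite addrA subrK.
exact: nrmD.
Qed.

Lemma ler_nrm_dist x y : `|nrm x - nrm y| <= nrm (x - y).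
Proof.
have := nrmD (x - y) y; have := nrmD (y - x) x.
rewrite !subrK (nrm_distC y) ler_norml => ? ?.
by apply/andP; split; lra.
Qed.

Lemma nrm_le_mx_norm : exists2 M, 0 < M & forall v, nrm v <= M * `|v|.
Proof.
pose e i : 'rV[R]_n := delta_mx 0 i.
exists (\sum_i nrm (e i) + 1) => [|v].
  by rewrite ltr_pwDr // sumr_ge0 // => i _; exact: nrm_ge0.
apply: le_trans (_ : \sum_i nrm (e i) * `|v| <= _); last first.
  by rewrite -mulr_suml ler_wpM2r // lerDl.
rewrite {1}(row_sum_delta v).
apply: le_trans (_ : \sum_i nrm (v 0 i *: e i) <= _).
  by elim/big_ind2: _ => //; [rewrite nrm0 | move=> ? ? ? ? ? ?; apply/(le_trans (nrmD _ _))/lerD].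
apply: ler_sum => i _; rewrite nrmZ mulrC.
by apply: ler_wpM2l; [exact: nrm_ge0 | exact: ler_mx_norm_entry].
Qed.

Lemma nrm_continuous : continuous nrm.
Proof.
have [M M0 nrmM] := nrm_le_mx_norm.
move=> x; apply/(@cvgrPdist_lt _ _ _ (nbhs x)) => e e0; near=> y.
have : ball x (e / M) y by near: y; apply: nbhsx_ballx; rewrite divr_gt0.
rewrite -ball_normE /= => xy.
apply: le_lt_trans (ler_nrm_dist x y) _; apply: le_lt_trans (nrmM _) _.
by rewrite mulrC -ltr_pdivlMr.
Unshelve. all: by end_near. Qed.

Lemma mx_norm_le_nrm : exists2 c, 0 < c & forall v, c * `|v| <= nrm v.
Proof.
pose S := [set v : 'rV[R]_n | `|v| = 1].
have normalize_in_S v : v != 0 -> S (`|v|^-1 *: v).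
  move=> v0; rewrite /S /= normrZ normrV ?unitfE ?normr_eq0 //.
  by rewrite normr_id mulVf ?normr_eq0.
suff [c c0 cS] : exists2 c, 0 < c & forall u, S u -> c <= nrm u.
  exists c => // v; have [->|v0] := eqVneq v 0; first by rewrite normr0 mulr0 nrm_ge0.
  have := cS _ (normalize_in_S v v0).
  by rewrite nrmZ ger0_norm ?invr_ge0 // ler_pdivlMl ?normr_gt0 // mulrC.
(* [S] is empty only when [n = 0] *)
have [[u Su]|S0] := pselect (S !=set0); last first.
  by exists 1 => // u Su; exfalso; apply: S0; exists u.
have S_compact : compact S.
  apply: bounded_closed_compact.
    by apply: filterS (nbhs_pinfty_ge (num_real 1)) => B B1 v /= ->.
  rewrite (_ : S = (@Num.norm _ 'rV[R]_n) @^-1` [set x | x = 1]) //.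
  by apply: preimage_closed; [move=> x _; exact: norm_continuous | exact: closed_eq].
have [z /set_mem Sz zmin] :=
  EVT_min_rV (ex_intro _ u Su) S_compact (continuous_subspaceT nrm_continuous).
exists (nrm z) => [|w Sw]; last by apply: zmin; rewrite inE.
rewrite lt_neqAle nrm_ge0 andbT; apply/eqP => /esym/nrm_eq0 z0.
by move: Sz; rewrite /S /= z0 normr0 => /eqP; rewrite eq_sym oner_eq0.
Qed.

Lemma compact_nrm_diameter (S : set 'rV[R]_n) :
  compact S -> exists2 Dm, 0 <= Dm & forall u w, S u -> S w -> nrm (u - w) <= Dm.
Proof.
move=> cS; have [B [_ SB]] := compact_bounded cS.
have [M M0 nrmM] := nrm_le_mx_norm.
have SB1 x : S x -> `|x| <= `|B| + 1.
  by move=> Sx; apply: (SB (`|B| + 1)) => //; rewrite (le_lt_trans (ler_norm B)) ?ltrDl.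
exists (M * ((`|B| + 1) + (`|B| + 1))) => [|u w Su Sw].
  by rewrite mulr_ge0 ?addr_ge0 // ltW.
apply: le_trans (nrmM _) _; rewrite ler_pM2l //.
by apply: le_trans (ler_normB _ _) _; exact: lerD (SB1 _ Su) (SB1 _ Sw).
Qed.

Lemma pair_le_dnorm y x : pair y x <= dnorm nrm y * nrm x.
Proof.
have [c c0 cnrm] := mx_norm_le_nrm.
pose U := [set pair y v | v in [set v | nrm v <= 1]].
have U_ub : has_ubound U.
  exists ((\sum_i `|y 0 i|) / c) => _ [v /= v1 <-].
  apply: le_trans (ler_norm _) _; apply: le_trans (normr_pair_le _ _) _.
  rewrite ler_pdivlMr // -mulrA ler_piMr ?sumr_ge0 // mulrC.
  exact: le_trans (cnrm v) v1.
have [x0|x0] := eqVneq (nrm x) 0; first by rewrite x0 mulr0 (nrm_eq0 x0) pair0r.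
have xp : 0 < nrm x by rewrite lt_neqAle eq_sym x0 nrm_ge0.
have Ux : U (pair y ((nrm x)^-1 *: x)).
  by exists ((nrm x)^-1 *: x) => //=; rewrite nrmZ ger0_norm ?invr_ge0 ?nrm_ge0 // mulVf.
by have := ub_le_sup U_ub Ux; rewrite pairZr mulrC ler_pdivrMr.
Qed.

Lemma normr_pair_le_dnorm y x : `|pair y x| <= dnorm nrm y * nrm x.
Proof.
rewrite ler_norml pair_le_dnorm andbT lerNl -pairNr -(nrmN x).
exact: pair_le_dnorm.
Qed.

Definition nrm_cluster (u : nat -> 'rV[R]_n) z :=
  forall N e, 0 < e -> exists2 k, (N <= k)%N & nrm (u k - z) < e.

Definition dual_lipschitz (S : set 'rV[R]_n) (F : 'rV[R]_n -> 'rV[R]_n) (L : R) :=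
  forall x x', S x -> S x' -> dnorm nrm (F x - F x') <= L * nrm (x - x').

Lemma normr_pair_lipschitz S F L a b v : dual_lipschitz S F L -> S a -> S b ->
  `|pair (F a - F b) v| <= `|L| * nrm (a - b) * nrm v.
Proof.
move=> FL Sa Sb; apply: le_trans (normr_pair_le_dnorm _ _) _.
rewrite ler_wpM2r ?nrm_ge0 //; apply: le_trans (FL _ _ Sa Sb) _.
by rewrite ler_wpM2r ?nrm_ge0 ?ler_norm.
Qed.

Section bregman.
Variables (S : set 'rV[R]_n) (h : 'rV[R]_n -> R) (gh : 'rV[R]_n -> 'rV[R]_n) (K Lh : R).
Hypothesis S_convex : convex_set S.
Hypothesis h_diff : forall x, S x -> differentiable h x.
Hypothesis gh_grad : forall x, S x -> forall v, pair (gh x) v = 'd h x v.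
Hypothesis K_gt0 : 0 < K.
Hypothesis h_strong : forall x x', S x -> S x' ->
  K * nrm (x - x') ^+ 2 <= pair (gh x - gh x') (x - x').
Hypothesis gh_lip : dual_lipschitz S gh Lh.

Local Notation D := (bregman h gh).

Lemma is_derive_h_segment a b (t : R) : S a -> S b -> 0 <= t -> t <= 1 ->
  is_derive t 1 (fun s => h (b + s *: (a - b))) (pair (gh (b + t *: (a - b))) (a - b)).
Proof.
move=> Sa Sb t0 t1; have St := convex_segment S_convex Sa Sb t0 t1.
by rewrite gh_grad //; apply: is_derive_segment; exact: h_diff.
Qed.

Lemma h_mvt a b : S a -> S b ->
  exists2 c, 0 < c < 1 & h a - h b = pair (gh (b + c *: (a - b))) (a - b).
Proof.
move=> Sa Sb.
have [t /[!in_itv] /= /andP[/ltW t0 /ltW t1]||c] :=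
  @MVT R (fun s => h (b + s *: (a - b))) (fun t => pair (gh (b + t *: (a - b))) (a - b))
  0 1 ltr01 _ _.
- exact: is_derive_h_segment.
- apply: derivable_within_continuous => t /[!in_itv] /= /andP[t0 t1].
  by case: (is_derive_h_segment Sa Sb t0 t1).
rewrite in_itv /= scale1r scale0r addr0 [b + _]addrC subrK subr0 mulr1 => c01 hab.
by exists c.
Qed.

Lemma bregman_ge_sqr a b : S a -> S b -> K / 2 * nrm (a - b) ^+ 2 <= D a b.
Proof.
move=> Sa Sb.
set P := pair (gh b) (a - b); set Q := K / 2 * nrm (a - b) ^+ 2.
(* MVT for [s |-> h (b + s (a - b)) - P s - Q s^2]: strong convexity makes its slope >= 0 *)
pose f := (fun s => h (b + s *: (a - b))) - (fun s => P * s + Q * (s * s)).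
pose df t := pair (gh (b + t *: (a - b))) (a - b) - (P + Q * (t + t)).
have f_derive (t : R) : 0 <= t -> t <= 1 -> is_derive t 1 f (df t).
  move=> t0 t1; apply: is_deriveB; first exact: is_derive_h_segment.
  exact: is_derive_quadratic.
have [t /[!in_itv] /= /andP[/ltW t0 /ltW t1]||c /[!in_itv] /= /andP[c0 c1]] :=
  @MVT R f df 0 1 ltr01 _ _.
- exact: f_derive.
- apply: derivable_within_continuous => t /[!in_itv] /= /andP[t0 t1].
  by case: (f_derive t t0 t1).
rewrite /f !fctE /= scale1r scale0r [b + _]addrC subrK addr0 !mulr1 !mulr0 !addr0 !subr0.
rewrite /df => fdf.
have := h_strong (convex_segment S_convex Sa Sb (ltW c0) (ltW c1)) Sb.
rewrite addrAC subrr add0r nrmZ pairZr pairBl ger0_norm ?(ltW c0) // -/P => strong.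
have {}strong : K * c * nrm (a - b) ^+ 2 <= pair (gh (b + c *: (a - b))) (a - b) - P.
  by move: strong; rewrite exprMn; nra.
have Qc : Q * (c + c) = K * c * nrm (a - b) ^+ 2 by rewrite /Q; field.
rewrite /bregman -/P; lra.
Qed.

Lemma bregman_ge0 a b : S a -> S b -> 0 <= D a b.
Proof.
move=> Sa Sb; apply: le_trans (bregman_ge_sqr Sa Sb).
by rewrite mulr_ge0 ?sqr_ge0 // divr_ge0 // ltW.
Qed.

Lemma bregman_le_sqr a b : S a -> S b -> D a b <= `|Lh| * nrm (a - b) ^+ 2.
Proof.
move=> Sa Sb.
have -> : D a b = pair (gh a - gh b) (a - b) - D b a.
  by rewrite /bregman !pairBl !pairBr; ring.
apply: le_trans (_ : pair (gh a - gh b) (a - b) <= _).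
  by rewrite lerBlDr lerDl bregman_ge0.
apply: le_trans (ler_norm _) _; apply: le_trans (normr_pair_lipschitz _ gh_lip Sa Sb) _.
by rewrite -mulrA.
Qed.

Lemma bregman_le_shift p x y : S p -> S x -> S y ->
  D p y <= D p x + `|Lh| * nrm (y - x) * nrm (p - y).
Proof.
move=> Sp Sx Sy; have := bregman_three_point h gh p x y.
have := ler_norm (- pair (gh y - gh x) (p - y)); rewrite normrN.
have := normr_pair_lipschitz (p - y) gh_lip Sy Sx.
have := bregman_ge0 Sy Sx; lra.
Qed.

Lemma bregman_cvg0_cvg z (u : nat -> 'rV[R]_n) : S z -> (forall k, S (u k)) ->
  (fun k => D z (u k)) @ \oo --> 0 -> u @ \oo --> z.
Proof.
move=> Sz Su Dcvg; apply/cvgrPdist_lt => e e0.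
have [c c0 cnrm] := mx_norm_le_nrm.
have ce0 : 0 < c * e by rewrite mulr_gt0.
have Kce0 : 0 < K / 2 * (c * e) ^+ 2 by rewrite mulr_gt0 ?divr_gt0 ?exprn_gt0.
apply: filterS (cvgr_lt _ Dcvg _ Kce0) => k Dk.
have := le_lt_trans (bregman_ge_sqr Sz (Su k)) Dk.
rewrite ltr_pM2l ?divr_gt0 // => sqr_lt.
have := cnrm (z - u k); have := nrm_ge0 (z - u k).
rewrite -(ltr_pM2l c0); nra.
Qed.

Lemma prox_optimality x y z u : S x -> is_prox S h gh x y z -> S u ->
  0 <= pair (gh z - gh x - y) (u - z).
Proof.
move=> Sx [Sz zmin] Su; set v := u - z.
(* compare the prox objective at [z] and at [z + t v], then let [t] go to [0] *)
apply: (@ge0_of_small_perturbation _ _ (`|Lh| * nrm v ^+ 2)) => t t0 t1.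
have Sw := convex_segment S_convex Su Sz (ltW t0) t1.
have wmin := zmin _ Sw.
have [c /andP[c0 c1]] := h_mvt Sw Sz; rewrite addrAC subrr add0r scalerA => hmvt.
have Sxi : S (z + (c * t) *: v).
  by apply: (convex_segment S_convex Su Sz); rewrite ?mulr_ge0 ?mulr_ile1 // ltW.
have lip : pair (gh (z + (c * t) *: v) - gh z) v <= `|Lh| * nrm v ^+ 2 * t.
  apply: le_trans (ler_norm _) _; apply: le_trans (normr_pair_lipschitz _ gh_lip Sxi Sz) _.
  have ct0 : 0 <= c * t by rewrite mulr_ge0 // ltW.
  rewrite addrAC subrr add0r nrmZ (ger0_norm ct0).
  rewrite [leLHS](_ : _ = `|Lh| * nrm v ^+ 2 * (c * t)); last by ring.
  by apply: ler_wpM2l; [rewrite mulr_ge0 ?sqr_ge0 | rewrite ger_pMl // ltW].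
have tlip := ler_wpM2l (ltW t0) lip.
suff : 0 <= t * (pair (gh z - gh x - y) v + t * (`|Lh| * nrm v ^+ 2)).
  by rewrite (pmulr_rge0 _ t0).
move: wmin hmvt tlip; rewrite -/v; clearbody v.
rewrite /bregman !pairBl !pairBr !pairDr !pairZr; nra.
Qed.

Section omd_step.
Variables (g : 'rV[R]_n -> 'rV[R]_n) (Lg b : R).
Hypothesis Lg_ge0 : 0 <= Lg.
Hypothesis g_lip : dual_lipschitz S g Lg.

Lemma omd_step_descent x y x' p gam : S x -> S p ->
  is_prox S h gh x (- (gam *: g x)) y -> is_prox S h gh x (- (gam *: g y)) x' ->
  0 <= gam -> gam <= b ->
  D p x' <= D p x - gam * pair (g y) (y - p)
    - (K - b * Lg) / 2 * (nrm (x' - y) ^+ 2 + nrm (y - x) ^+ 2).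
Proof.
move=> Sx Sp Yprox X'prox gam0 gamb.
have [[Sy _] [Sx' _]] := (Yprox, X'prox).
have opt_x' := prox_optimality Sx X'prox Sp.
have opt_y := prox_optimality Sx Yprox Sx'.
have three_x' := bregman_three_point h gh p x x'.
have three_y := bregman_three_point h gh x' x y.
have strong_x'y := bregman_ge_sqr Sx' Sy.
have strong_yx := bregman_ge_sqr Sy Sx.
set N1 := nrm (y - x) in strong_yx *; set N2 := nrm (x' - y) in strong_x'y *.
have N1_ge0 : 0 <= N1 := nrm_ge0 _.
have N2_ge0 : 0 <= N2 := nrm_ge0 _.
have lip : pair (g y - g x) (y - x') <= Lg * N1 * N2.
  apply: le_trans (ler_norm _) _; apply: le_trans (normr_pair_lipschitz _ g_lip Sy Sx) _.
  by rewrite ger0_norm // (nrm_distC y x').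
(* Young's inequality absorbs the extrapolation error into the two strong-convexity terms *)
have young : gam * pair (g y - g x) (y - x') <= b * Lg / 2 * (N1 ^+ 2 + N2 ^+ 2).
  have amgm : 2 * (N1 * N2) <= N1 ^+ 2 + N2 ^+ 2.
    by have := sqr_ge0 (N1 - N2); rewrite sqrrB; lra.
  apply: le_trans (ler_wpM2l gam0 lip) _.
  apply: (@le_trans _ _ (b * (Lg * N1 * N2))); first by apply: ler_wpM2r; rewrite ?mulr_ge0.
  have : 0 <= b * Lg by rewrite mulr_ge0 // (le_trans gam0).
  nra.
clearbody N1 N2.
move: opt_x' opt_y young three_x' three_y; rewrite !pairBl !pairNl !pairZl !pairBr; nra.
Qed.

Section omd_sequence.
Variables (gamma : nat -> R) (gmin Dm eps0 : R) (Xs Ys : nat -> 'rV[R]_n).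
Variables (sad : 'rV[R]_n -> Prop) (p : 'rV[R]_n).
Hypothesis S_compact : compact S.
Hypothesis S_diam : forall u w, S u -> S w -> nrm (u - w) <= Dm.
Hypothesis gamma_le : forall k, gamma k <= b.
Hypothesis bLg_lt_K : b * Lg < K.
Hypothesis gmin_gt0 : 0 < gmin.
Hypothesis gamma_ge : \forall k \near \oo, gmin <= gamma k.
Hypothesis X0_in : S (Xs 0).
Hypothesis Y_prox : forall k, is_prox S h gh (Xs k) (- (gamma k *: g (Xs k))) (Ys k).
Hypothesis X_prox : forall k, is_prox S h gh (Xs k) (- (gamma k *: g (Ys k))) (Xs k.+1).
Hypothesis svi_sad : forall x, S x -> (forall u, S u -> 0 <= pair (g x) (u - x)) -> sad x.
Hypothesis p_in : S p.
Hypothesis p_mvi : forall x, S x -> 0 <= pair (g x) (x - p).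
Hypothesis eps0_gt0 : 0 < eps0.
Hypothesis sad_local_mvi : forall z, sad z -> forall x, S x ->
  D z x <= eps0 -> 0 <= pair (g x) (x - z).

Lemma Xs_in k : S (Xs k). Proof. by elim: k => // k _; case: (X_prox k). Qed.
Lemma Ys_in k : S (Ys k). Proof. by case: (Y_prox k). Qed.

Lemma gamma_ge0 : \forall k \near \oo, 0 <= gamma k.
Proof. by apply: filterS gamma_ge => k; apply: le_trans (ltW gmin_gt0). Qed.

Lemma omd_steps_sqr_cvg0 : (fun k => nrm (Ys k - Xs k) ^+ 2) @ \oo --> 0.
Proof.
have [N _ gammaN] := gamma_ge0.
apply: (@descent_sqr_cvg0 _ (fun k => D p (Xs k)) _ N ((K - b * Lg) / 2)).
- by rewrite divr_gt0 // subr_gt0.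
- by move=> k; exact: bregman_ge0 p_in (Xs_in k).
move=> k /gammaN gk0.
have := omd_step_descent (Xs_in k) p_in (Y_prox k) (X_prox k) gk0 (gamma_le k).
have := mulr_ge0 gk0 (p_mvi (Ys_in k)).
have : 0 <= (K - b * Lg) / 2 * nrm (Xs k.+1 - Ys k) ^+ 2.
  by rewrite mulr_ge0 ?sqr_ge0 // divr_ge0 // subr_ge0 ltW.
rewrite mulrDr; lra.
Qed.

Lemma omd_steps_small eta : 0 < eta -> \forall k \near \oo, nrm (Ys k - Xs k) <= eta.
Proof.
move=> eta0; apply: filterS (cvgr_lt _ omd_steps_sqr_cvg0 _ (exprn_gt0 2 eta0)) => k.
by have := nrm_ge0 (Ys k - Xs k); nra.
Qed.

Lemma omd_cluster : exists2 z, S z & nrm_cluster Xs z.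
Proof.
have [z Sz zclus] := compact_cluster_seq S_compact Xs_in.
have [M M0 nrmM] := nrm_le_mx_norm.
exists z => // N e e0.
have [k Nk close] := zclus N (e / M) (divr_gt0 e0 M0).
by exists k => //; apply: le_lt_trans (nrmM _) _; rewrite mulrC -ltr_pdivlMr.
Qed.

Lemma omd_svi_residual z u : S z -> S u -> exists2 C, 0 <= C & forall k, gmin <= gamma k ->
  - (C * (nrm (Xs k - z) + nrm (Ys k - Xs k))) <= pair (g z) (u - z).
Proof.
move=> Sz Su; set Gz := `|dnorm nrm (g z)|.
have Dm0 : 0 <= Dm := le_trans (nrm_ge0 _) (S_diam Su Su).
exists (`|Lh| * Dm / gmin + Lg * Dm + Gz) => [|k gk].
  by rewrite !addr_ge0 ?mulr_ge0 ?invr_ge0 ?normr_ge0 // ltW.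
set d := nrm (Xs k - z); set r := nrm (Ys k - Xs k).
have opt : 0 <= pair (gh (Ys k) - gh (Xs k)) (u - Ys k) + gamma k * pair (g (Xs k)) (u - Ys k).
  by move: (prox_optimality (Xs_in k) (Y_prox k) Su); rewrite pairBl pairNl pairZl opprK.
have gh_bound : pair (gh (Ys k) - gh (Xs k)) (u - Ys k) <= `|Lh| * r * Dm.
  apply: le_trans (ler_norm _) _.
  apply: le_trans (normr_pair_lipschitz _ gh_lip (Ys_in k) (Xs_in k)) _.
  by apply: ler_wpM2l; [rewrite mulr_ge0 ?nrm_ge0 | exact: S_diam (Ys_in k)].
have g_bound : pair (g (Xs k) - g z) (u - Ys k) <= Lg * d * Dm.
  apply: le_trans (ler_norm _) _.
  apply: le_trans (normr_pair_lipschitz _ g_lip (Xs_in k) Sz) _.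
  rewrite ger0_norm //.
  by apply: ler_wpM2l; [rewrite mulr_ge0 ?nrm_ge0 | exact: S_diam (Ys_in k)].
have gz_bound : pair (g z) (z - Ys k) <= Gz * (d + r).
  apply: le_trans (ler_norm _) _; apply: le_trans (normr_pair_le_dnorm _ _) _.
  apply: le_trans (ler_wpM2r (nrm_ge0 _) (ler_norm _)) _.
  apply: ler_wpM2l; first exact: normr_ge0.
  by rewrite /d /r (nrm_distC (Xs k)) (nrm_distC (Ys k)) nrm_distD.
have [d0 r0] : 0 <= d /\ 0 <= r by rewrite !nrm_ge0.
clearbody Gz d r.
have split_gXs : pair (g (Xs k)) (u - Ys k) =
    pair (g z) (u - z) + pair (g (Xs k) - g z) (u - Ys k) + pair (g z) (z - Ys k).
  by rewrite !pairBl !pairBr; ring.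
(* optimality of [Ys k] bounds [gamma k * <g (Xs k), u - Ys k>] below by [- |Lh| r Dm] *)
have W_lb : - (`|Lh| * Dm / gmin * r) <= pair (g (Xs k)) (u - Ys k).
  rewrite -(ler_pM2l gmin_gt0) mulrN.
  rewrite [X in - X <= _](_ : _ = `|Lh| * r * Dm); last by field; exact: lt0r_neq0.
  have gk0 : 0 < gamma k := lt_le_trans gmin_gt0 gk.
  rewrite -(ler_pM2l gk0); have : 0 <= (gamma k - gmin) * (`|Lh| * r * Dm).
    by rewrite mulr_ge0 ?subr_ge0 // !mulr_ge0.
  have : 0 <= gmin * (gamma k * pair (g (Xs k)) (u - Ys k) + `|Lh| * r * Dm).
    by apply: mulr_ge0; [exact: ltW | lra].
  lra.
have : 0 <= `|Lh| * Dm / gmin * d by rewrite !mulr_ge0 ?invr_ge0 // ltW.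
have : 0 <= Lg * Dm * r by rewrite !mulr_ge0.
lra.
Qed.

Lemma omd_svi z : S z -> nrm_cluster Xs z ->
  forall u, S u -> 0 <= pair (g z) (u - z).
Proof.
move=> Sz zclus u Su; have [C C0 residual] := omd_svi_residual Sz Su.
apply/ler_addgt0Pr => e e0.
have eta0 : 0 < e / 2 / (C + 1) by rewrite !divr_gt0 // ltr_pwDr.
have [N1 _ gammaN1] := gamma_ge; have [N2 _ stepN2] := omd_steps_small eta0.
have [k Nk close] := zclus (maxn N1 N2) _ eta0; rewrite geq_max in Nk.
case/andP: Nk => /gammaN1 gk /stepN2 step.
have := residual k gk.
have e2 : 0 <= e / 2 by rewrite divr_ge0 // ltW.
have := ler_mul_div_add1 C0 e2 (ltW close); have := ler_mul_div_add1 C0 e2 step.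
rewrite mulrDr; lra.
Qed.

Lemma omd_local_descent z k : sad z -> S z -> 0 <= gamma k ->
  D z (Xs k) <= eps0 / 2 -> `|Lh| * Dm * nrm (Ys k - Xs k) <= eps0 / 2 ->
  D z (Xs k.+1) <= D z (Xs k).
Proof.
move=> sz Sz gk0 Dk stepk.
have DY : D z (Ys k) <= eps0.
  have := bregman_le_shift Sz (Xs_in k) (Ys_in k).
  have : `|Lh| * nrm (Ys k - Xs k) * nrm (z - Ys k) <= `|Lh| * Dm * nrm (Ys k - Xs k).
    rewrite mulrAC; apply: ler_wpM2r; first exact: nrm_ge0.
    by apply: ler_wpM2l; [exact: normr_ge0 | exact: S_diam (Ys_in k)].
  lra.
have := omd_step_descent (Xs_in k) Sz (Y_prox k) (X_prox k) gk0 (gamma_le k).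
have := mulr_ge0 gk0 (sad_local_mvi sz (Ys_in k) DY).
have : 0 <= (K - b * Lg) / 2 * (nrm (Xs k.+1 - Ys k) ^+ 2 + nrm (Ys k - Xs k) ^+ 2).
  by rewrite mulr_ge0 ?addr_ge0 ?sqr_ge0 // divr_ge0 // subr_ge0 ltW.
lra.
Qed.

Lemma omd_eventual_descent z : sad z -> S z ->
  \forall k \near \oo, D z (Xs k) <= eps0 / 2 -> D z (Xs k.+1) <= D z (Xs k).
Proof.
move=> sz Sz; have Dm0 : 0 <= Dm := le_trans (nrm_ge0 _) (S_diam Sz Sz).
have eta0 : 0 < eps0 / 2 / (`|Lh| * Dm + 1) by rewrite !divr_gt0 // ltr_pwDr // mulr_ge0.
near=> k => Dk; apply: omd_local_descent => //; first by near: k; exact: gamma_ge0.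
apply: ler_mul_div_add1; [exact: mulr_ge0 | by rewrite divr_ge0 // ltW |].
by near: k; exact: omd_steps_small.
Unshelve. all: by end_near. Qed.

Lemma omd_bregman_small z : sad z -> S z ->
  nrm_cluster Xs z ->
  forall dl, 0 < dl -> dl <= eps0 / 2 ->
  exists N, forall k, (N <= k)%N -> D z (Xs k) <= dl /\ D z (Xs k.+1) <= D z (Xs k).
Proof.
move=> sz Sz zclus dl dl0 dle.
have [N _ descent] := omd_eventual_descent sz Sz.
pose rho := Num.min 1 (dl / (`|Lh| + 1)).
have rho0 : 0 < rho by rewrite lt_min ltr01 divr_gt0 // ltr_pwDr.
have [k1 Nk1 close] := zclus N rho rho0.
exists k1; apply: (sublevel_nonincreasing _ Nk1).
  by move=> k /descent + Dk; apply; exact: le_trans dle.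
apply: le_trans (bregman_le_sqr Sz (Xs_in k1)) _; rewrite nrm_distC.
have r0 := nrm_ge0 (Xs k1 - z).
have r1 : nrm (Xs k1 - z) <= 1 by apply: le_trans (ltW close) _; rewrite ge_min lexx.
have r_dl : nrm (Xs k1 - z) <= dl / (`|Lh| + 1).
  by apply: le_trans (ltW close) _; rewrite ge_min lexx orbT.
apply: le_trans (ler_mul_div_add1 (normr_ge0 Lh) (ltW dl0) r_dl).
by rewrite expr2; apply: ler_wpM2l => //; exact: ler_piMl.
Qed.

Lemma omd_bregman_cvg0 z : sad z -> S z ->
  nrm_cluster Xs z ->
  (fun k => D z (Xs k)) @ \oo --> 0.
Proof.
move=> sz Sz zclus; apply/cvgrPdist_le => e e0.
have dl0 : 0 < Num.min e (eps0 / 2) by rewrite lt_min e0 divr_gt0.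
have dle : Num.min e (eps0 / 2) <= eps0 / 2 by rewrite ge_min lexx orbT.
have [N DN] := omd_bregman_small sz Sz zclus dl0 dle.
exists N => // k /DN[Dk _].
rewrite sub0r normrN ger0_norm; last exact: bregman_ge0 Sz (Xs_in k).
by apply: le_trans Dk _; rewrite ge_min lexx.
Qed.

Lemma omd_converges : exists z, sad z /\ Xs @ \oo --> z /\
  exists n0, forall k, (n0 <= k)%N -> D z (Xs k.+1) <= D z (Xs k).
Proof.
have [z Sz zclus] := omd_cluster.
have sz := svi_sad Sz (omd_svi Sz zclus).
exists z; split=> //; split; first exact: bregman_cvg0_cvg Sz Xs_in (omd_bregman_cvg0 sz Sz zclus).
have eps0_2 : 0 < eps0 / 2 by rewrite divr_gt0.
have [N DN] := omd_bregman_small sz Sz zclus eps0_2 (lexx _).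
by exists N => k /DN[].
Qed.

End omd_sequence.
End omd_step.

End bregman.

End normed_setting.

Theorem theorem1 (R : realType) (d1 d2 : nat)
  (nrm : 'rV[R]_(d1 + d2) -> R)
  (X1 : set 'rV[R]_d1) (X2 : set 'rV[R]_d2)
  (f : 'rV[R]_(d1 + d2) -> R) (g : 'rV[R]_(d1 + d2) -> 'rV[R]_(d1 + d2))
  (h : 'rV[R]_(d1 + d2) -> R) (gh : 'rV[R]_(d1 + d2) -> 'rV[R]_(d1 + d2))
  (K Lh Lg : R) (gamma : nat -> R) (Xs Ys : nat -> 'rV[R]_(d1 + d2)) :
  is_norm nrm ->
  compact X1 -> convex_set X1 -> compact X2 -> convex_set X2 ->
  (* f is continuously differentiable and g = (grad_{x1} f, - grad_{x2} f) *)
  (forall x, prodset X1 X2 x -> differentiable f x) ->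
  {within prodset X1 X2, continuous g} ->
  (forall x, prodset X1 X2 x -> forall v1 v2,
     pair (g x) (row_mx v1 v2) = 'd f x (row_mx v1 0) - 'd f x (row_mx 0 v2)) ->
  (* h: differentiable, gradient gh, K-strongly convex, Lh-Lipschitz gradient *)
  (forall x, prodset X1 X2 x -> differentiable h x) ->
  (forall x, prodset X1 X2 x -> forall v, pair (gh x) v = 'd h x v) ->
  0 < K ->
  (forall x x', prodset X1 X2 x -> prodset X1 X2 x' ->
     K * nrm (x - x') ^+ 2 <= pair (gh x - gh x') (x - x')) ->
  (forall x x', prodset X1 X2 x -> prodset X1 X2 x' ->
     dnorm nrm (gh x - gh x') <= Lh * nrm (x - x')) ->
  (* Bregman reciprocity *)
  (forall p (u : nat -> 'rV[R]_(d1 + d2)), prodset X1 X2 p ->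
     (forall n, prodset X1 X2 (u n)) -> u @ \oo --> p ->
     (fun n => bregman h gh p (u n)) @ \oo --> 0) ->
  (* coherence *)
  (forall x, is_SVI (prodset X1 X2) g x -> is_saddle X1 X2 f x) ->
  (exists p, is_saddle X1 X2 f p /\ is_MVI (prodset X1 X2) g p) ->
  (exists eps0 : R, 0 < eps0 /\
     forall xs, is_saddle X1 X2 f xs -> forall x, prodset X1 X2 x ->
       bregman h gh xs x <= eps0 -> 0 <= pair (g x) (x - xs)) ->
  (* g is Lg-Lipschitz *)
  0 <= Lg ->
  (forall x x', prodset X1 X2 x -> prodset X1 X2 x' ->
     dnorm nrm (g x - g x') <= Lg * nrm (x - x')) ->
  (* step sizes: 0 < lim gamma <= sup gamma < K / Lg *)
  (exists ginf : R, gamma @ \oo --> ginf /\ 0 < ginf) ->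
  (exists b : R, (forall n, gamma n <= b) /\ b * Lg < K) ->
  (* optimistic mirror descent *)
  prodset X1 X2 (Xs 0%N) ->
  (forall n, is_prox (prodset X1 X2) h gh (Xs n) (- (gamma n *: g (Xs n))) (Ys n)) ->
  (forall n, is_prox (prodset X1 X2) h gh (Xs n) (- (gamma n *: g (Ys n))) (Xs n.+1)) ->
  exists xs, is_saddle X1 X2 f xs /\ Xs @ \oo --> xs /\
    exists n0, forall n, (n0 <= n)%N -> bregman h gh xs (Xs n.+1) <= bregman h gh xs (Xs n).
Proof.
move=> nrm_norm cX1 convX1 cX2 convX2 _ _ _ h_diff gh_grad K_gt0 h_strong gh_lip _ svi_saddle
  [p [_ [Sp p_mvi]]] [eps0 [eps0_gt0 saddle_local_mvi]] Lg_ge0 g_lip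
  [ginf [gamma_cvg ginf_gt0]] [b [gamma_le bLg_lt_K]] X0_in Y_prox X_prox.
have S_compact := compact_prodset cX1 cX2.
have [Dm _ S_diam] := compact_nrm_diameter nrm_norm S_compact.
have ginf2_gt0 : 0 < ginf / 2 by rewrite divr_gt0.
have gamma_ge : \forall k \near \oo, ginf / 2 <= gamma k.
  apply: filterS (cvgr_gt _ gamma_cvg _ (_ : ginf / 2 < ginf)) => [k /ltW //|].
  by rewrite ltr_pdivrMr // ltr_pMr // ltr1n.
apply: (omd_converges nrm_norm (convex_prodset convX1 convX2) h_diff gh_grad K_gt0
  h_strong gh_lip Lg_ge0 g_lip S_compact S_diam gamma_le bLg_lt_K ginf2_gt0 gamma_ge
  X0_in Y_prox X_prox _ Sp p_mvi eps0_gt0 saddle_local_mvi).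
by move=> x Sx x_svi; apply: svi_saddle.
Qed.
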